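(* Let $\sigma\in\mathcal C_n(321)$ and $\tau\in\mathcal C_m(321)$ with $n,m\ge1$, and let $k$ be the index with $\hat\tau_k=1$. Define the word $$\hat\tau\odot\hat\sigma=(\hat\tau_1+n)\cdots(\hat\tau_k+n)\,\hat\sigma_1\hat\sigma_2\cdots\hat\sigma_n\,(\hat\tau_{k+1}+n)\cdots(\hat\tau_m+n)\in S_{n+m}.$$ Then $\theta^{-1}(\hat\tau\odot\hat\sigma)\in\mathcal C_{n+m}(321)$.
   Context: Permutations of $[n]$ are written in one-line notation. A permutation contains $321$ if there are $i<j<k$ with $\pi_i>\pi_j>\pi_k$. $\mathcal C_n$ is the set of cyclic permutations of $[n]$ (a single $n$-cycle), and $\mathcal C_n(321)$ those avoiding $321$. The standard cycle notation of $\pi$ writes each cycle with its largest element first, as $(m,\pi(m),\pi^2(m),\dots)$, and lists the cycles in increasing order of their largest elements. $\theta:S_n\to S_n$ sends $\pi$ to the permutation whose one-line notation is the standard cycle notation of $\pi$ with parentheses erased; $\hat\pi=\theta(\pi)$. *)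

From mathcomp Require Import all_boot all_fingroup.
Set Implicit Arguments. Unset Strict Implicit. Unset Printing Implicit Defensive.

(* Permutations of [n] are modelled as {perm 'I_n}; element i : 'I_n stands
   for the integer i+1 of [n]. Words (one-line notations) are seq nat with
   values in 1..n. *)

Definition oneline n (p : {perm 'I_n}) : seq nat := [seq (p i).+1 | i <- enum 'I_n].

Definition contains321 (w : seq nat) : Prop :=
  exists i j k, [/\ i < j, j < k, k < size w,
    nth 0 w j < nth 0 w i & nth 0 w k < nth 0 w j].
Definition avoids321 (w : seq nat) : Prop := ~ contains321 w.

Definition cyclic_perm n (p : {perm 'I_n}) : Prop :=
  forall x : 'I_n, porbit p x = [set: 'I_n].

Definition C321 n (p : {perm 'I_n}) : Prop := cyclic_perm p /\ avoids321 (oneline p).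

Definition cycle_max n (p : {perm 'I_n}) (m : 'I_n) : bool :=
  [forall x in porbit p m, x <= m].

Definition cycle_word n (p : {perm 'I_n}) (m : 'I_n) : seq nat :=
  [seq (nat_of_ord x).+1 | x <- traject p m #|porbit p m|].

(* theta(p): standard cycle notation with parentheses erased, as a word *)
Definition theta_word n (p : {perm 'I_n}) : seq nat :=
  flatten [seq cycle_word p m | m <- enum 'I_n & cycle_max p m].

Definition odot (n : nat) (t s : seq nat) : seq nat :=
  let k := index 1 t in
  [seq x + n | x <- take k.+1 t] ++ s ++ [seq x + n | x <- drop k.+1 t].

From mathcomp Require Import all_boot all_fingroup.
From mathcomp Require Import zify.
Set Implicit Arguments. Unset Strict Implicit. Unset Printing Implicit Defensive.

(* If sigma and tau are cyclic, theta(sigma) and theta(tau) are their cycles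
   read from the largest element.  Splicing the cycle of sigma into the cycle
   of tau + n right after n+1 gives the cycle of the permutation pi that agrees
   with sigma (+) tau except that n+1 |-> n and sigma^-1(n) |-> n + tau(1); its
   theta-word is the given word.  In one-line notation pi is sigma with its
   maximal value n raised to n + tau(1), followed by tau + n with its first
   value lowered to n, and a 321 in pi would give a 321 in sigma or tau.
   Conversely a theta-word whose first letter is its largest one comes from a
   cyclic permutation, which its word determines, so pi is the only preimage. *)

Lemma iter_map_orbit (A B : Type) (f : B -> B) (g : A -> A) (h : A -> B) x l :
  (forall i, i < l -> f (h (iter i g x)) = h (iter i.+1 g x)) ->
  forall i, i <= l -> iter i f (h x) = h (iter i g x).
Proof. by move=> fgh; elim=> [//|i IHi] lt_il /=; rewrite IHi ?fgh // ltnW. Qed.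

Lemma traject_map_orbit (A B : Type) (f : B -> B) (g : A -> A) (h : A -> B) x l :
  (forall i, i.+1 < l -> f (h (iter i g x)) = h (iter i.+1 g x)) ->
  traject f (h x) l = map h (traject g x l).
Proof.
elim: l x => [//|l IHl] x fgh /=; congr (_ :: _); case: l IHl fgh => [//|l] IHl fgh.
have -> : f (h x) = h (g x) by exact: (fgh 0).
by rewrite IHl // => i lt_il; rewrite -!iterSr; exact: fgh.
Qed.

Lemma succ_val_inj r : injective (fun y : 'I_r => (val y).+1).
Proof. by move=> y1 y2 /succn_inj /val_inj. Qed.

Lemma nth_oneline K (p : {perm 'I_K}) (x : 'I_K) : nth 0 (oneline p) x = (p x).+1.
Proof. by rewrite /oneline (nth_map x) ?size_enum_ord // nth_ord_enum. Qed.

Lemma avoids321_onelineP K (p : {perm 'I_K}) :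
  avoids321 (oneline p) <->
  (forall i j k : 'I_K, i < j -> j < k -> ~~ ((p j < p i) && (p k < p j))).
Proof.
split=> [p321 i j k ij jk | p321 [i [j [k [ij jk lt_kK ji kj]]]]].
  apply/negP=> /andP[ji kj]; apply: p321; exists i, j, k.
  by rewrite /oneline size_map size_enum_ord !nth_oneline !ltnS.
rewrite size_map size_enum_ord in lt_kK.
have lt_jK : j < K by lia.
have lt_iK : i < K by lia.
move: ji kj; rewrite -[i]/(val (Ordinal lt_iK)) -[j]/(val (Ordinal lt_jK)).
rewrite -[k]/(val (Ordinal lt_kK)) !nth_oneline !ltnS => ji kj.
by have := p321 (Ordinal lt_iK) (Ordinal lt_jK) (Ordinal lt_kK) ij jk; rewrite ji kj.
Qed.

Section CyclicPerm.
Variable N : nat.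
Implicit Types p q : {perm 'I_N.+1}.

Lemma card_porbit_cyclic p x : cyclic_perm p -> #|porbit p x| = N.+1.
Proof. by move=> cp; rewrite cp cardsT card_ord. Qed.

Lemma iter_cyclic_period p x : cyclic_perm p -> iter N.+1 p x = x.
Proof. by move=> cp; have := iter_porbit p x; rewrite (card_porbit_cyclic x cp). Qed.

Lemma mem_traject_cyclic p x y : cyclic_perm p -> y \in traject p x N.+1.
Proof.
by move=> cp; have := porbit_traject p x y; rewrite (card_porbit_cyclic x cp) cp inE => <-.
Qed.

Lemma iter_cyclic_inj p x i j : cyclic_perm p -> i < N.+1 -> j < N.+1 ->
  iter i p x = iter j p x -> i = j.
Proof.
move=> cp lt_iN lt_jN eq_ij; apply/eqP.
have := uniq_traject_porbit p x; rewrite (card_porbit_cyclic x cp) => uniq_traj.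
by rewrite -(nth_uniq x _ _ uniq_traj) ?size_traject // !nth_traject // eq_ij.
Qed.

Lemma theta_word_cyclic p : cyclic_perm p ->
  theta_word p = [seq (val y).+1 | y <- traject p ord_max N.+1].
Proof.
move=> cp.
have maxE z : cycle_max p z = (z == ord_max).
  apply/forallP/eqP=> [zmax | -> y]; last by rewrite leq_ord implybT.
  apply: val_inj; apply/eqP; rewrite /= eqn_leq leq_ord.
  by have := zmax ord_max; rewrite cp inE.
rewrite /theta_word (eq_filter maxE) filter_pred1_uniq ?enum_uniq ?mem_enum //=.
by rewrite cats0 /cycle_word (card_porbit_cyclic _ cp).
Qed.

Lemma traject_cyclic_inj p q : cyclic_perm p -> cyclic_perm q ->
  traject p ord_max N.+1 = traject q ord_max N.+1 -> p = q.
Proof.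
move=> cp cq eq_traj; apply/permP=> y.
have /trajectP[i lt_iN ->] := mem_traject_cyclic ord_max y cp.
have eq_iter j : j < N.+1 -> iter j p ord_max = iter j q ord_max.
  by move=> lt_jN; rewrite -!(nth_traject _ lt_jN) eq_traj.
rewrite -iterS (eq_iter i lt_iN) -iterS; case: (ltngtP i N) => [lt_iN' | | ->].
- by rewrite eq_iter.
- lia.
- by rewrite !iter_cyclic_period.
Qed.

(* The cycles are listed by increasing maxima, so theta(p) starts with the
   least cycle maximum. *)
Lemma head_theta_word_le p z : cycle_max p z -> head 0 (theta_word p) <= z.+1.
Proof.
move=> zmax; rewrite /theta_word.
set maxs := [seq _ <- _ | _].
have sorted_maxs : sorted (fun a b : 'I_N.+1 => a <= b) maxs.
  apply: sorted_filter; first by move=> ???; apply: leq_trans.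
  by have := iota_sorted 0 N.+1; rewrite -val_enum_ord sorted_map.
have : z \in maxs by rewrite mem_filter zmax mem_enum.
case: maxs sorted_maxs => [//|a maxs'] /= sorted_maxs.
have /allP a_min : all (fun b : 'I_N.+1 => a <= b) maxs'.
  by apply: order_path_min sorted_maxs => ???; apply: leq_trans.
rewrite /cycle_word; case: #|porbit p a| (card_porbit_neq0 p a) => [//|c] _ /=.
by rewrite inE ltnS => /predU1P[-> // | /a_min].
Qed.

Lemma cyclic_of_cycle_max p :
  (forall z, cycle_max p z -> z = ord_max) -> cyclic_perm p.
Proof.
move=> maxE.
have porbitE x : porbit p x = porbit p ord_max.
  have [M xM Mmax] := @arg_maxnP _ x (mem (porbit p x)) val (porbit_id p x).
  have porbit_M : porbit p M = porbit p x by apply/eqP; rewrite eq_porbit_mem.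
  have /maxE eq_M : cycle_max p M by apply/forall_inP=> y; rewrite porbit_M => /Mmax.
  by rewrite -porbit_M eq_M.
by move=> x; apply/setP=> y; rewrite inE porbitE -(porbitE y) porbit_id.
Qed.

Lemma cyclic_of_head_theta_word p : head 0 (theta_word p) = N.+1 -> cyclic_perm p.
Proof.
move=> head_max; apply: cyclic_of_cycle_max => z /head_theta_word_le.
by rewrite head_max ltnS => le_Nz; apply: val_inj; apply/eqP; rewrite /= eqn_leq leq_ord.
Qed.

End CyclicPerm.

Section Splice.
Variables (n' m' : nat) (s : {perm 'I_n'.+1}) (t : {perm 'I_m'.+1}).
Local Notation n := n'.+1.
Local Notation m := m'.+1.

Definition dsum_fun (x : 'I_(n + m)) : 'I_(n + m) :=
  match split x with inl a => lshift m (s a) | inr b => rshift n (t b) end.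

Lemma dsum_fun_inj : injective dsum_fun.
Proof.
move=> x y; rewrite /dsum_fun -[x]splitK -[y]splitK.
case: (split x) => [a|b]; case: (split y) => [c|d];
  rewrite !unsplitK /= => /(congr1 val) /= eq_xy; apply: val_inj => /=.
- by congr val; apply: (@perm_inj _ s); apply: val_inj.
- by have := ltn_ord (s a); lia.
- by have := ltn_ord (s c); lia.
- by congr (n + val _); apply: (@perm_inj _ t); apply: val_inj => /=; lia.
Qed.

Definition splice : {perm 'I_(n + m)} :=
  perm dsum_fun_inj * tperm (lshift m ord_max) (rshift n (t ord0)).

Lemma splice_lshift a : splice (lshift m a) =
  if s a == ord_max then rshift n (t ord0) else lshift m (s a).
Proof.
rewrite permM [perm dsum_fun_inj _]permE /dsum_fun.
have -> : split (lshift m a) = inl a := unsplitK (inl a).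
case: eqP => [-> | ne_a]; first by rewrite tpermL.
rewrite tpermD //; apply/eqP => /(congr1 val) /= eq_a.
- by apply: ne_a; apply: val_inj.
- by have := ltn_ord (s a); lia.
Qed.

Lemma splice_rshift b : splice (rshift n b) =
  if b == ord0 then lshift m ord_max else rshift n (t b).
Proof.
rewrite permM [perm dsum_fun_inj _]permE /dsum_fun.
have -> : split (rshift n b) = inr b := unsplitK (inr b).
case: eqP => [-> | ne_b]; first by rewrite tpermR.
rewrite tpermD //; apply/eqP => /(congr1 val) /= eq_b.
- lia.
- by apply: ne_b; apply: (@perm_inj _ t); apply: val_inj => /=; lia.
Qed.

Lemma val_splice_lshift a :
  val (splice (lshift m a)) = if val (s a) == n' then n + t ord0 else s a.
Proof.
rewrite splice_lshift; case: (s a =P ord_max) => [-> | ne_a] /=; first by rewrite eqxx.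
by case: eqP => // eq_a; case: ne_a; apply: val_inj.
Qed.

Lemma val_splice_rshift b :
  val (splice (rshift n b)) = if val b == 0 then n' else n + t b.
Proof.
rewrite splice_rshift; case: (b =P ord0) => [-> | ne_b] //=.
by case: eqP => // eq_b; case: ne_b; apply: val_inj.
Qed.

Lemma splice_avoids321 :
  avoids321 (oneline s) -> avoids321 (oneline t) -> avoids321 (oneline splice).
Proof.
move=> /avoids321_onelineP s321 /avoids321_onelineP t321.
apply/avoids321_onelineP => i j k.
case: (split_ordP i) => [a1 ->|b1 ->]; case: (split_ordP j) => [a2 ->|b2 ->];
case: (split_ordP k) => [a3 ->|b3 ->];
  rewrite ?val_splice_lshift ?val_splice_rshift /= => ij jk.
- have := s321 a1 a2 a3 ij jk.
  have := leq_ord (s a1); have := leq_ord (s a2); have := leq_ord (s a3).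
  by repeat case: ifP => ?; lia.
- have := leq_ord (s a1); have := leq_ord (s a2).
  by repeat case: ifP => ?; lia.
- by have := ltn_ord a3; lia.
- have : 0 < b2 -> b2 < b3 -> ~~ ((t b2 < t ord0) && (t b3 < t b2)) := t321 ord0 b2 b3.
  have := leq_ord (s a1); have := leq_ord (t b2); have := leq_ord (t b3).
  by repeat case: ifP => ?; lia.
- by have := ltn_ord a2; lia.
- by have := ltn_ord a2; lia.
- by have := ltn_ord a3; lia.
- have lt_b12 : b1 < b2 by lia.
  have lt_b23 : b2 < b3 by lia.
  have := t321 b1 b2 b3 lt_b12 lt_b23.
  have := leq_ord (t b1); have := leq_ord (t b2); have := leq_ord (t b3).
  by repeat case: ifP => ?; lia.
Qed.

Hypotheses (cs : cyclic_perm s) (ct : cyclic_perm t).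

(* 0-based position of the letter 1 in theta(tau): the paper's k is k.+1. *)
Let k := index ord0 (traject t ord_max m).

Lemma k_lt : k < m.
Proof. by rewrite -[m](size_traject t ord_max) index_mem mem_traject_cyclic. Qed.

Lemma iter_k : iter k t ord_max = ord0.
Proof. by rewrite -(nth_traject _ k_lt) nth_index ?mem_traject_cyclic. Qed.

Lemma iter_t_neq0 i : i < m -> i != k -> iter i t ord_max != ord0.
Proof.
move=> lt_im; apply: contra => /eqP eq_i; apply/eqP.
by apply: (iter_cyclic_inj (x := ord_max) ct lt_im k_lt); rewrite eq_i iter_k.
Qed.

Lemma iter_s_neq_max i : 0 < i -> i < n -> iter i s ord_max != ord_max.
Proof.
move=> gt0_i lt_in; apply/eqP => /(iter_cyclic_inj (j := 0) cs lt_in (ltn0Sn n')) eq_i0.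
by rewrite eq_i0 in gt0_i.
Qed.

Lemma traject_t_split : traject t ord_max m =
  traject t ord_max k.+1 ++ traject t (iter k.+1 t ord_max) (m - k.+1).
Proof. by rewrite -trajectD subnKC ?k_lt. Qed.

Definition splice_traject : seq 'I_(n + m) :=
  map (@rshift n m) (traject t ord_max k.+1) ++ map (@lshift n m) (traject s ord_max n)
  ++ map (@rshift n m) (traject t (iter k.+1 t ord_max) (m - k.+1)).

Lemma traject_splice : traject splice (rshift n ord_max) (n + m) = splice_traject.
Proof.
have lt_km := k_lt.
have t_step i : i < k ->
    splice (rshift n (iter i t ord_max)) = rshift n (iter i.+1 t ord_max).
  by move=> lt_ik; rewrite splice_rshift ifN // iter_t_neq0 //; lia.
have s_step i : i < n' ->
    splice (lshift m (iter i s ord_max)) = lshift m (iter i.+1 s ord_max).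
  by move=> lt_in; rewrite splice_lshift ifN // -iterS iter_s_neq_max.
have enter_s : iter k.+1 splice (rshift n ord_max) = lshift m ord_max.
  by rewrite iterS (iter_map_orbit t_step) // iter_k splice_rshift eqxx.
have leave_s : iter n splice (lshift m ord_max) = rshift n (iter k.+1 t ord_max).
  rewrite iterS (iter_map_orbit s_step) // splice_lshift -iterS.
  by rewrite iter_cyclic_period // eqxx iterS iter_k.
have := trajectD splice k.+1 (n + (m - k.+1)) (rshift n ord_max).
rewrite (_ : k.+1 + _ = n + m); last by lia.
move->; rewrite trajectD enter_s leave_s.
rewrite (traject_map_orbit (g := t)) => [|i lt_ik]; last exact: t_step.
rewrite (traject_map_orbit (g := s)) => [|i lt_in]; last exact: s_step.
rewrite (traject_map_orbit (g := t)) // => i lt_i.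
by rewrite splice_rshift ifN // -iterD iter_t_neq0 //; lia.
Qed.

Lemma mem_splice_traject y : y \in splice_traject.
Proof.
rewrite !mem_cat; case: (split_ordP y) => [a ->|b ->].
  by rewrite map_f ?orbT ?mem_traject_cyclic.
have := mem_traject_cyclic ord_max b ct.
by rewrite traject_t_split mem_cat => /orP[] /(map_f (@rshift n m)) ->; rewrite ?orbT.
Qed.

Lemma splice_cyclic : cyclic_perm splice.
Proof.
have porbit_all z : z \in porbit splice (rshift n ord_max).
  have := mem_splice_traject z; rewrite -traject_splice => /trajectP[i _ ->].
  by rewrite -permX mem_porbit.
move=> x; apply/setP=> y; rewrite inE.
have /eqP -> : porbit splice x == porbit splice (rshift n ord_max).
  by rewrite eq_porbit_mem.
exact: porbit_all.
Qed.

Lemma odot_theta_word :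
  odot n (theta_word t) (theta_word s) = [seq (val y).+1 | y <- splice_traject].
Proof.
rewrite /odot (theta_word_cyclic ct) (theta_word_cyclic cs).
rewrite -[1]/((fun y : 'I_m => (val y).+1) ord0) (index_map (@succ_val_inj m)) -/k.
rewrite -map_take -map_drop take_traject ?k_lt // traject_t_split.
rewrite drop_size_cat ?size_traject // /splice_traject !map_cat -!map_comp.
by congr (_ ++ _ ++ _); apply: eq_map => y /=; lia.
Qed.

Lemma theta_word_splice : theta_word splice = odot n (theta_word t) (theta_word s).
Proof.
rewrite odot_theta_word (theta_word_cyclic (N := n' + m) splice_cyclic).
have -> : (ord_max : 'I_(n' + m).+1) = rshift n (ord_max : 'I_m).
  by apply: val_inj => /=; lia.
by rewrite traject_splice.
Qed.

Lemma theta_word_splice_inj (p : {perm 'I_(n + m)}) :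
  theta_word p = odot n (theta_word t) (theta_word s) -> p = splice.
Proof.
move=> theta_p.
have cp : cyclic_perm p.
  by apply: (cyclic_of_head_theta_word (N := n' + m)); rewrite theta_p odot_theta_word /=; lia.
apply: (traject_cyclic_inj (N := n' + m) cp splice_cyclic).
apply: (inj_map (@succ_val_inj (n + m))).
by rewrite -(theta_word_cyclic cp) -(theta_word_cyclic splice_cyclic) theta_p theta_word_splice.
Qed.

End Splice.

Theorem mainTheorem7 (n m : nat) (sigma : {perm 'I_n}) (tau : {perm 'I_m}) :
  0 < n -> 0 < m -> C321 sigma -> C321 tau ->
  let w := odot n (theta_word tau) (theta_word sigma) in
  (exists pi : {perm 'I_(n + m)}, theta_word pi = w) /\
  (forall pi : {perm 'I_(n + m)}, theta_word pi = w -> C321 pi).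
Proof.
case: n sigma => [//|n'] sigma; case: m tau => [//|m'] tau _ _ [cs s321] [ct t321] w.
split; first by exists (splice sigma tau); rewrite theta_word_splice.
move=> p /(theta_word_splice_inj cs ct) ->.
by split; [apply: splice_cyclic | apply: splice_avoids321].
Qed.
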